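(* Let $I$ be a list of items with sizes in $(1/3,1]$ whose optimal packing consists of $k=\mathrm{OPT}(I)$ bins, each containing exactly one large item and one medium item; for $i\in[k]$ let $l_i$ and $m_i$ be the large and the medium item of the $i$-th bin of this optimal packing. Let $\pi\in\mathcal{S}_n$ be any permutation and let $X$ be the number of indices $i\in[k]$ such that $l_i$ arrives before $m_i$ in $I^\pi$. Then the Best Fit packing of $I^\pi$ contains at least $X$ bins that each consist of exactly one large item and one medium item.
   Context: An item of size $x$ is large if $x>1/2$ and medium if $x\in(1/3,1/2]$. Bin packing: items with sizes in $(0,1]$ are packed into unit-capacity bins (total size per bin at most $1$); $\mathrm{OPT}(I)$ is the minimum number of bins. The online algorithm Best Fit processes the items in the given order and packs the current item into the fullest bin (largest current load) into which it fits, opening a new bin if it fits into no existing bin; items are never moved. For $\pi\in\mathcal{S}_n$ (permutations of $[n]$) and $I=(x_1,\ldots,x_n)$, $I^\pi=(x_{\pi(1)},\ldots,x_{\pi(n)})$. *)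

From HB Require Import structures.
From mathcomp Require Import all_boot all_order all_algebra all_fingroup.
Set Implicit Arguments. Unset Strict Implicit. Unset Printing Implicit Defensive.
Import Order.TTheory GRing.Theory Num.Theory.
Local Open Scope ring_scope.

Section BinPacking.
Variables (R : realFieldType) (n : nat) (x : 'I_n -> R).

Definition large (j : 'I_n) : bool := 2^-1 < x j.
Definition medium (j : 'I_n) : bool := (3^-1 < x j) && (x j <= 2^-1).

Definition is_packing (b : nat) (f : 'I_n -> 'I_b) : Prop :=
  forall c : 'I_b, \sum_(j | f j == c) x j <= 1.

Definition opt_is (k : nat) : Prop :=
  (exists f : 'I_n -> 'I_k, is_packing f) /\
  (forall (b : nat) (f : 'I_n -> 'I_b), is_packing f -> (k <= b)%N).

(* Best Fit: a state is the list of open bins, each a list of items. *)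
Definition load (B : seq 'I_n) : R := \sum_(j <- B) x j.

Definition fits (j : 'I_n) (B : seq 'I_n) : bool := load B + x j <= 1.

(* One Best Fit step for item j; ties among fullest bins are resolved
   arbitrarily (any choice is allowed). *)
Definition bf_step (bins : seq (seq 'I_n)) (j : 'I_n)
  (bins' : seq (seq 'I_n)) : Prop :=
  (exists2 p : nat, (p < size bins)%N /\ fits j (nth [::] bins p) &
     (forall q : nat, (q < size bins)%N -> fits j (nth [::] bins q) ->
        load (nth [::] bins q) <= load (nth [::] bins p)) /\
     bins' = set_nth [::] bins p (j :: nth [::] bins p))
  \/
  ((forall q : nat, (q < size bins)%N -> ~~ fits j (nth [::] bins q)) /\
     bins' = rcons bins [:: j]).

Inductive bf_run : seq (seq 'I_n) -> seq 'I_n -> seq (seq 'I_n) -> Prop :=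
| bf_nil bins : bf_run bins [::] bins
| bf_cons bins j s bins1 out :
    bf_step bins j bins1 -> bf_run bins1 s out -> bf_run bins (j :: s) out.

Definition LM_bin (B : seq 'I_n) : bool :=
  if B is [:: a; c] then (large a && medium c) || (medium a && large c)
  else false.

End BinPacking.

From HB Require Import structures.
From mathcomp Require Import all_boot all_order all_algebra all_fingroup.
From mathcomp Require Import lra zify.
Import Order.TTheory GRing.Theory Num.Theory.
Local Open Scope ring_scope.
Set Implicit Arguments. Unset Strict Implicit. Unset Printing Implicit Defensive.

(* Every item exceeds 1/3, so a Best Fit bin holds one or two items and an
   arriving item can only join a bin that holds a single item.  Call pair i
   pending when l_i has arrived and was already paired with another medium
   item while m_i has not arrived yet, and an orphan when l_i is still alone
   although m_i has arrived.  With room_i = 1 - x(m_i), X the number of pairs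
   whose medium item has already arrived, after its large one, and L the number of
   large/medium bins, Best Fit keeps, for every threshold w,
     X + #{pending i | room_i <= w} <= L + #{orphan i | x(l_i) <= w}.
   A pending pair is a debt (its medium item will raise X but may find no
   large item to join), an orphan a credit (a lone large item that a later
   medium item of room at least x(l_i) will join, since Best Fit prefers a
   fitting large singleton to anything else).  A step changes both sides only
   at the pair of the arriving item and the pair of the item it joins; when a
   pending m_a joins l_c, the thresholds between x(l_c) and room_a are covered
   by the invariant at room_a, because every orphan fitting m_a is at most as
   large as l_c.  At w = 0 no orphan counts, so X <= L once all items have
   been packed. *)

Lemma leq_sum_except1 (I : finType) (F G : I -> nat) a s s' :
  (forall i, i != a -> F i <= G i)%N -> (F a + s <= G a + s')%N ->
  (\sum_i F i + s <= \sum_i G i + s')%N.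
Proof.
move=> FG_off FG_a; rewrite (bigD1 a) //= [X in (_ <= X + _)%N](bigD1 a) //=.
have := leq_sum (index_enum I) FG_off; lia.
Qed.

Lemma leq_sum_except2 (I : finType) (F G : I -> nat) a c s s' : c != a ->
  (forall i, i != a -> i != c -> F i <= G i)%N ->
  (F a + F c + s <= G a + G c + s')%N ->
  (\sum_i F i + s <= \sum_i G i + s')%N.
Proof.
move=> ca FG_off FG_ac; rewrite (bigD1 a) // (bigD1 c) //=.
rewrite [X in (_ <= X + _)%N](bigD1 a) // [X in (_ <= _ + X + _)%N](bigD1 c) //=.
have : (\sum_(i | (i != a) && (i != c)) F i <= \sum_(i | (i != a) && (i != c)) G i)%N.
  by apply: leq_sum => i /andP [ia ic]; exact: FG_off.
lia.
Qed.

Section BestFitTwoItemBins.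
Variables (R : realFieldType) (n : nat) (x : 'I_n -> R).
Hypothesis x_gt13 : forall j, 3^-1 < x j.

Definition singles (bins : seq (seq 'I_n)) : {set 'I_n} := [set z | [:: z] \in bins].

Definition two_item_bins (bins : seq (seq 'I_n)) : bool :=
  all (fun B => (0 < size B <= 2)%N) bins.

Inductive bf_singles_step (S : {set 'I_n}) (L : nat) (j : 'I_n) :
    {set 'I_n} -> nat -> Prop :=
| SinglesOpen : (forall y, y \in S -> 1 < x y + x j) ->
    bf_singles_step S L j (j |: S) L
| SinglesJoin y : y \in S -> x y + x j <= 1 ->
    (forall z, z \in S -> x z + x j <= 1 -> x z <= x y) ->
    bf_singles_step S L j (S :\ y) (L + LM_bin x [:: j; y]).

Lemma load_singleton y : load x [:: y] = x y.
Proof. by rewrite /load big_seq1. Qed.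

Lemma fits_two_item_bin j B :
  (0 < size B <= 2)%N -> fits x j B -> exists y, B = [:: y].
Proof.
case: B => [|y [|z [|? ?]]] // _; first by exists y.
rewrite /fits /load !big_cons big_nil => fit; exfalso.
by have := x_gt13 y; have := x_gt13 z; have := x_gt13 j; lra.
Qed.

Lemma singles_rcons bins j : singles (rcons bins [:: j]) = j |: singles bins.
Proof. by apply/setP=> z; rewrite !inE mem_rcons inE eqseq_cons andbT orbC. Qed.

Lemma singles_join b1 b2 y j : uniq (flatten (b1 ++ [:: y] :: b2)) ->
  singles (b1 ++ [:: j; y] :: b2) = singles (b1 ++ [:: y] :: b2) :\ y.
Proof.
rewrite flatten_cat cat_uniq /= => /and4P [_ /norP [y_b1 _] y_b2 _].
apply/setP=> z; rewrite !inE !mem_cat !inE !eqseq_cons andbF andbT /=.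
have [->|//] := eqVneq z y; apply/negbTE; rewrite negb_or.
have single_flat bs : [:: y] \in bs -> y \in flatten bs.
  by move=> yb; apply/flattenP; exists [:: y]; rewrite ?mem_head.
by rewrite (contraNF (@single_flat _) y_b1) (contraNF (@single_flat _) y_b2).
Qed.

Lemma bf_step_singles bins j bins' :
  uniq (flatten bins) -> two_item_bins bins -> bf_step x bins j bins' ->
  [/\ bf_singles_step (singles bins) (count (LM_bin x) bins) j
        (singles bins') (count (LM_bin x) bins'),
      perm_eq (flatten bins') (j :: flatten bins) & two_item_bins bins'].
Proof.
move=> uniq_bins small_bins [[p [p_lt fit] [best ->]] | [no_fit ->]]; last first.
  split.
  - rewrite singles_rcons -cats1 count_cat /= !addn0; constructor=> y.
    rewrite inE => y_in; have := no_fit (index [:: y] bins).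
    by rewrite index_mem nth_index // /fits load_singleton -ltNge; apply.
  - by rewrite flatten_rcons perm_catC.
  - by rewrite /two_item_bins all_rcons; exact: small_bins.
have [y By] := fits_two_item_bin (all_nthP [::] small_bins _ p_lt) fit.
have y_single : y \in singles bins by rewrite inE -By mem_nth.
have y_fit : x y + x j <= 1 by move: fit; rewrite By /fits load_singleton.
have y_best z : z \in singles bins -> x z + x j <= 1 -> x z <= x y.
  rewrite inE => z_in; have := best (index [:: z] bins).
  by rewrite index_mem nth_index // By /fits !load_singleton; apply.
have Ebins : bins = take p bins ++ [:: y] :: drop p.+1 bins.
  by rewrite -By -drop_nth ?cat_take_drop.
rewrite set_nthE p_lt By.
move: (take p bins) (drop p.+1 bins) Ebins => b1 b2 Ebins; subst bins.
split.
- have -> : count (LM_bin x) (b1 ++ [:: j; y] :: b2) =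
           (count (LM_bin x) (b1 ++ [:: y] :: b2) + LM_bin x [:: j; y])%N.
    by rewrite !count_cat /=; lia.
  by rewrite singles_join //; constructor.
- by rewrite !flatten_cat /= (perm_catCA _ [:: j]).
- by move: small_bins; rewrite /two_item_bins !all_cat.
Qed.
End BestFitTwoItemBins.


Section BestFitAccounting.
Variables (R : realFieldType) (n k : nat) (x : 'I_n -> R) (l m : 'I_k -> 'I_n).
Hypotheses (l_inj : injective l) (m_inj : injective m).
Hypothesis l_neq_m : forall i i', l i != m i'.
Hypotheses (l_large : forall i, large x (l i)) (m_medium : forall i, medium x (m i)).
Hypothesis pair_fit : forall i, x (l i) + x (m i) <= 1.
Hypothesis cover : forall z, exists i, z = l i \/ z = m i.

Definition room i := 1 - x (m i).

Definition pending (A S : {set 'I_n}) i := [&& l i \in A, l i \notin S & m i \notin A].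
Definition orphan (A S : {set 'I_n}) i := (l i \in S) && (m i \in A).

Definition debt A S w i : nat := pending A S i && (room i <= w).
Definition credit A S w i : nat := orphan A S i && (x (l i) <= w).

Definition total_debt A S w := (\sum_(i < k) debt A S w i)%N.
Definition total_credit A S w := (\sum_(i < k) credit A S w i)%N.

Definition bf_inv A S X L :=
  forall w, (X + total_debt A S w <= L + total_credit A S w)%N.

(* lia treats set memberships and real comparisons as boolean atoms only once
   they are generalized. *)
Ltac bool_lia :=
  repeat match goal with
  | |- context [?z \in ?A] => let b := fresh "b" in move: (z \in A) => b
  | |- context [(x ?z <= ?v)%R] => let b := fresh "b" in move: (x z <= v)%R => b
  | |- context [(room ?i <= ?v)%R] => let b := fresh "b" in move: (room i <= v)%R => b
  end; lia.

Lemma l_gt_half i : 2^-1 < x (l i).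
Proof. exact: l_large. Qed.

Lemma m_le_half i : x (m i) <= 2^-1.
Proof. by case/andP: (m_medium i). Qed.

Lemma m_not_large i : large x (m i) = false.
Proof. by rewrite /large ltNge m_le_half. Qed.

Lemma l_le_room i : x (l i) <= room i.
Proof. by rewrite /room lerBrDr pair_fit. Qed.

Lemma eq_ll i i' : (l i == l i') = (i == i').
Proof. exact: inj_eq. Qed.

Lemma eq_mm i i' : (m i == m i') = (i == i').
Proof. exact: inj_eq. Qed.

Lemma eq_lm i i' : (l i == m i') = false.
Proof. exact/negbTE/l_neq_m. Qed.

Lemma eq_ml i i' : (m i == l i') = false.
Proof. by rewrite eq_sym eq_lm. Qed.

Definition pair_eqE := (eq_ll, eq_mm, eq_lm, eq_ml).

Lemma bf_inv_at (A S A' S' : {set 'I_n}) X L X' L' w : bf_inv A S X L ->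
  (\sum_(i < k) (debt A' S' w i + credit A S w i) + (X' + L) <=
   \sum_(i < k) (debt A S w i + credit A' S' w i) + (X + L'))%N ->
  (X' + total_debt A' S' w <= L' + total_credit A' S' w)%N.
Proof.
move=> inv; rewrite !big_split /= -!/(total_debt _ _ _) -!/(total_credit _ _ _).
by have := inv w; lia.
Qed.

Lemma bf_inv_below (A S : {set 'I_n}) X L v w : w <= v ->
  (forall b, orphan A S b -> x (l b) <= v -> x (l b) <= w) ->
  (X + total_debt A S v <= L + total_credit A S v)%N ->
  (X + total_debt A S w <= L + total_credit A S w)%N.
Proof.
move=> wv orphan_vw; have debt_wv : (total_debt A S w <= total_debt A S v)%N.
  apply: leq_sum => i _; rewrite /debt.
  by case rw: (room i <= w); rewrite ?andbF // (le_trans rw wv).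
have credit_vw : (total_credit A S v <= total_credit A S w)%N.
  apply: leq_sum => i _; rewrite /credit; case ob: (orphan A S i) => //=.
  by case lv: (x (l i) <= v) => //=; rewrite (orphan_vw i ob lv).
lia.
Qed.

Lemma balance_unchanged (A S A' S' : {set 'I_n}) w i :
  (l i \in A') = (l i \in A) -> (m i \in A') = (m i \in A) ->
  (l i \in S') = (l i \in S) ->
  (debt A' S' w i + credit A S w i <= debt A S w i + credit A' S' w i)%N.
Proof. by rewrite /debt /credit /pending /orphan => -> -> ->. Qed.

Lemma bf_inv_large (A S S' : {set 'I_n}) X L L' a :
  l a \notin A -> (forall i, i != a -> (l i \in S') = (l i \in S)) ->
  (l a \in S) ==> (l a \in S') -> (L + (l a \notin S') <= L')%N ->
  bf_inv A S X L -> bf_inv (l a |: A) S' X L'.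
Proof.
move=> laA S'_off S'_a L'_ge inv w; apply: (bf_inv_at inv).
apply: (leq_sum_except1 (a := a)) => [i ia|].
  by apply: balance_unchanged; rewrite ?inE ?pair_eqE ?(negbTE ia) ?S'_off.
rewrite /debt /credit /pending /orphan !inE eqxx pair_eqE (negbTE laA) /=.
by move: S'_a L'_ge; bool_lia.
Qed.

Lemma bf_inv_medium_unpaired (A S S' : {set 'I_n}) X L a :
  m a \notin A -> (forall b, l b \in S -> 1 < x (l b) + x (m a)) ->
  (forall i, (l i \in S') = (l i \in S)) ->
  bf_inv A S X L -> bf_inv (m a |: A) S' (X + (l a \in A)) L.
Proof.
move=> maA no_fit S'_l inv.
have laS : l a \notin S by apply/negP => /no_fit; rewrite ltNge pair_fit.
have local w : (l a \in A) ==> (room a <= w) ->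
    (X + (l a \in A) + total_debt (m a |: A) S' w <=
     L + total_credit (m a |: A) S' w)%N.
  move=> hw; apply: (bf_inv_at inv); apply: (leq_sum_except1 (a := a)) => [i ia|].
    by apply: balance_unchanged; rewrite ?inE ?pair_eqE ?(negbTE ia) ?S'_l.
  rewrite /debt /credit /pending /orphan !inE eqxx S'_l (negbTE laS) (negbTE maA) /=.
  by move: hw; bool_lia.
move=> w; have [|] := boolP ((l a \in A) ==> (room a <= w)); first exact: local.
rewrite negb_imply -ltNge => /andP [_ wa].
apply: (bf_inv_below (v := room a)) => [|b /andP [lb _] lbv|]; first exact: ltW.
  by have := no_fit b; rewrite -S'_l lb => /(_ isT); move: lbv; rewrite /room; lra.
by apply: local; rewrite lexx implybT.
Qed.

Lemma bf_inv_medium_join_own (A S : {set 'I_n}) X L a :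
  m a \notin A -> l a \in S ->
  bf_inv A S X L -> bf_inv (m a |: A) (S :\ l a) (X + (l a \in A)) L.+1.
Proof.
move=> maA laS inv w; apply: (bf_inv_at inv); apply: (leq_sum_except1 (a := a)) => [i ia|].
  by apply: balance_unchanged; rewrite !inE ?pair_eqE ?(negbTE ia).
rewrite /debt /credit /pending /orphan !inE !eqxx (negbTE maA) /=.
by bool_lia.
Qed.

Lemma bf_inv_medium_join_other (A S : {set 'I_n}) X L a c :
  m a \notin A -> c != a -> l c \in S ->
  (forall b, l b \in S -> x (l b) + x (m a) <= 1 -> x (l b) <= x (l c)) ->
  bf_inv A S X L -> bf_inv (m a |: A) (S :\ l c) (X + (l a \in A)) L.+1.
Proof.
move=> maA ca lcS best inv.
have xc_xa w : (l a \in S) ==> (x (l c) <= w) ==> (x (l a) <= w).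
  by apply/implyP=> laS; apply/implyP; apply: le_trans (best a laS (pair_fit a)).
have rc_xc w : (room c <= w) ==> (x (l c) <= w).
  by apply/implyP; apply: le_trans (l_le_room c).
have local w : ~~ pending A S a || (room a <= w) || ~~ (x (l c) <= w) ->
    (X + (l a \in A) + total_debt (m a |: A) (S :\ l c) w <=
     L.+1 + total_credit (m a |: A) (S :\ l c) w)%N.
  move=> hw; apply: (bf_inv_at inv); apply: (leq_sum_except2 ca) => [i ia ic|].
    by apply: balance_unchanged;
      rewrite !inE ?pair_eqE ?(negbTE ia) ?(negbTE ic).
  move: hw (rc_xc w) (xc_xa w); rewrite /debt /credit /pending /orphan !inE !eqxx.
  by rewrite !pair_eqE (negbTE maA) [a == c]eq_sym (negbTE ca) lcS /=; bool_lia.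
move=> w; have [|] := boolP (~~ pending A S a || (room a <= w) || ~~ (x (l c) <= w)).
  exact: local.
rewrite !negb_or !negbK -ltNge => /andP [/andP [_ wa] xc].
apply: (bf_inv_below (v := room a)) => [|b /andP [lb _] lbv|]; first exact: ltW.
  move: lb; rewrite !inE => /andP [_ lb]; apply: le_trans xc; apply: best lb _.
  by move: lbv; rewrite /room lerBrDr.
by apply: local; rewrite lexx orbT.
Qed.

Lemma bf_inv_large_step (A S S' : {set 'I_n}) X L L' a :
  l a \notin A -> bf_singles_step x S L (l a) S' L' ->
  bf_inv A S X L -> bf_inv (l a |: A) S' X L'.
Proof.
move=> laA [_ | y _ y_fit _].
  apply: bf_inv_large => //.
  - by move=> i ia; rewrite !inE pair_eqE (negbTE ia).
  - by rewrite !inE eqxx implybT.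
  - by rewrite !inE eqxx addn0.
have [c [|] Ey] := cover y; subst y.
  by exfalso; move: y_fit; have := l_gt_half a; have := l_gt_half c; lra.
have -> : LM_bin x [:: l a; m c] by rewrite /LM_bin l_large m_medium.
apply: bf_inv_large => //.
- by move=> i _; rewrite !inE pair_eqE.
- by rewrite !inE pair_eqE implybb.
- by rewrite leq_add2l leq_b1.
Qed.

Lemma bf_inv_medium_step (A S S' : {set 'I_n}) X L L' a :
  m a \notin A -> bf_singles_step x S L (m a) S' L' ->
  bf_inv A S X L -> bf_inv (m a |: A) S' (X + (l a \in A)) L'.
Proof.
move=> maA [no_fit | y yS _ best].
  by apply: bf_inv_medium_unpaired => // [b /no_fit | i] //; rewrite !inE pair_eqE.
have [c [|] Ey] := cover y; subst y.
  have -> : LM_bin x [:: m a; l c] by rewrite /LM_bin l_large m_medium orbT.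
  rewrite addn1; have [ca|ca] := eqVneq c a.
    by subst c; exact: bf_inv_medium_join_own.
  by apply: bf_inv_medium_join_other => // b; apply: best.
have -> : LM_bin x [:: m a; m c] = false.
  by rewrite /LM_bin !m_not_large andbF.
rewrite addn0; apply: bf_inv_medium_unpaired => // [b lb|i]; last by rewrite !inE pair_eqE.
rewrite ltNge; apply/negP => /(best _ lb).
by have := l_gt_half b; have := m_le_half c; lra.
Qed.

Variable pi : 'S_n.
Hypothesis x_gt13 : forall z, 3^-1 < x z.

Definition arrival (z : 'I_n) : nat := (pi^-1)%g z.
Definition order := [seq pi t | t <- enum 'I_n].
Definition arrived t : {set 'I_n} := [set z | (arrival z < t)%N].
Definition early t : {set 'I_k} :=
  [set a | (m a \in arrived t) && (arrival (l a) < arrival (m a))%N].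

Lemma arrival_inj : injective arrival.
Proof. by move=> z z' /val_inj /perm_inj. Qed.

Lemma arrival_order t j0 : (t < n)%N -> arrival (nth j0 order t) = t.
Proof.
move=> t_lt; rewrite (nth_map (Ordinal t_lt)) ?size_enum_ord //.
by rewrite /arrival permK nth_enum_ord.
Qed.

Lemma size_order : size order = n.
Proof. by rewrite size_map size_enum_ord. Qed.

Lemma arrived_succ t j : arrival j = t -> arrived t.+1 = j |: arrived t.
Proof.
by move=> <-; apply/setP=> z; rewrite !inE ltnS leq_eqVlt (inj_eq arrival_inj).
Qed.

Lemma early_large t a : arrival (l a) = t -> early t.+1 = early t.
Proof.
by move=> /arrived_succ arr; apply/setP=> i; rewrite /early arr !inE pair_eqE.
Qed.

Lemma card_early_medium t a :
  arrival (m a) = t -> #|early t.+1| = (#|early t| + (l a \in arrived t))%N.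
Proof.
move=> arr; rewrite (cardsD1 a) addnC; congr (_ + _)%N.
  apply: eq_card => i; rewrite /early (arrived_succ arr) !inE pair_eqE.
  by have [->|] := eqVneq i a; rewrite ?arr ?ltnn ?andbF.
by rewrite /early (arrived_succ arr) !inE eqxx arr.
Qed.

Lemma early_all t :
  (n <= t)%N -> early t = [set a | (arrival (l a) < arrival (m a))%N].
Proof. by move=> nt; apply/setP=> a; rewrite !inE (leq_trans (ltn_ord _) nt). Qed.

Lemma bf_inv_start : bf_inv (arrived 0) (singles [::]) #|early 0| 0.
Proof.
rewrite (_ : early 0 = set0); last by apply/setP=> a; rewrite !inE.
move=> w; rewrite cards0 /total_debt big1 // => i _.
by rewrite /debt /pending !inE.
Qed.

Lemma bf_inv_finish A S X L : bf_inv A S X L -> (X <= L)%N.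
Proof.
move=> /(_ 0); rewrite /total_credit big1 ?addn0 => [|i _].
  exact: leq_trans (leq_addr _ _).
by rewrite /credit lt_geF ?andbF //; have := l_gt_half i; lra.
Qed.

Lemma bf_run_early bins s out : bf_run x bins s out ->
  forall t, s = drop t order -> uniq (flatten bins ++ s) -> two_item_bins bins ->
  bf_inv (arrived t) (singles bins) #|early t| (count (LM_bin x) bins) ->
  (#|early n| <= count (LM_bin x) out)%N.
Proof.
elim=> {bins s out} [bins | bins j s bins1 out step _ IH] t s_eq uniq_bins small_bins inv.
  have nt : (n <= t)%N.
    by move: (congr1 size s_eq); rewrite size_drop size_order /=; lia.
  by rewrite early_all // -(early_all nt); apply: bf_inv_finish inv.
have t_lt : (t < n)%N.
  by rewrite ltnNge; apply/negP => nt; move: s_eq; rewrite drop_oversize ?size_order.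
move: s_eq; rewrite (drop_nth j) ?size_order // => -[j_eq s_eq].
have arr_j : arrival j = t by rewrite j_eq arrival_order.
have uniq_flat : uniq (flatten bins) by move: uniq_bins; rewrite cat_uniq => /and3P [].
have [single_step perm_bins small_bins1] :=
  bf_step_singles x_gt13 uniq_flat small_bins step.
apply: (IH t.+1) => //.
  by rewrite (perm_uniq (perm_cat perm_bins (perm_refl s))) -(uniq_catCA _ [:: j]).
rewrite (arrived_succ arr_j).
have [a [|] ja] := cover j; subst j.
  rewrite (early_large arr_j); apply: (bf_inv_large_step _ single_step inv).
  by rewrite inE arr_j ltnn.
rewrite (card_early_medium arr_j); apply: (bf_inv_medium_step _ single_step inv).
by rewrite inE arr_j ltnn.
Qed.

Lemma bf_order_early out : bf_run x [::] order out ->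
  (#|[set a | (arrival (l a) < arrival (m a))%N]| <= count (LM_bin x) out)%N.
Proof.
move=> run; rewrite -(early_all (leqnn n)).
apply: (bf_run_early run (t := 0)) => //; last exact: bf_inv_start.
  by rewrite drop0.
by rewrite /= map_inj_uniq ?enum_uniq //; apply: perm_inj.
Qed.

End BestFitAccounting.

Theorem lemma10 (R : realFieldType) (n k : nat) (x : 'I_n -> R)
  (l m : 'I_k -> 'I_n) (pi : 'S_n) (out : seq (seq 'I_n)) :
  (forall j : 'I_n, 3^-1 < x j /\ x j <= 1) ->
  opt_is x k ->
  (* the optimal packing: bin i contains exactly l i and m i, and these
     bins partition the items *)
  injective l -> injective m -> (forall i i', l i != m i') ->
  (forall j : 'I_n, exists i, j = l i \/ j = m i) ->
  (forall i, large x (l i) /\ medium x (m i) /\ x (l i) + x (m i) <= 1) ->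
  (* out is the Best Fit packing of I^pi = (x_{pi(1)}, ..., x_{pi(n)}) *)
  bf_run x [::] [seq pi t | t <- enum 'I_n] out ->
  (#|[set i : 'I_k | ((pi^-1)%g (l i) < (pi^-1)%g (m i))%N]|
     <= count (LM_bin x) out)%N.
Proof.
move=> x_bounds _ l_inj m_inj l_neq_m cover pair_shape run.
have l_large i : large x (l i) by case: (pair_shape i).
have m_medium i : medium x (m i) by case: (pair_shape i) => _ [].
have pair_fit i : x (l i) + x (m i) <= 1 by case: (pair_shape i) => _ [].
have x_gt13 j : 3^-1 < x j by case: (x_bounds j).
exact: (bf_order_early l_inj m_inj l_neq_m l_large m_medium pair_fit cover x_gt13 run).
Qed.
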